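(* Let $\kappa=(\xi,\eta)\in S\mathbb{H}$, regarded as a $2\times1$ column vector, and let $\check\kappa=(\eta',-\xi')$, also regarded as a column. Then there exists a $1\times2$ row vector $\tau=(\alpha,\beta)\in\mathbb{H}^2$ such that exactly one of $\tau\kappa=\alpha\xi+\beta\eta$ and $\tau\check\kappa=\alpha\eta'-\beta\xi'$ is zero.
   Context: For $q=a+bi+cj+dk\in\mathbb{H}$, $q'=a-bi-cj+dk$, $\bar q=a-bi-cj-dk$. $\mathcal{V}=\mathrm{span}_\mathbb{R}\{1,i,j\}$. $S\mathbb{H}=\{(\xi,\eta)\in\mathbb{H}^2\setminus\{(0,0)\}:\xi\bar\eta\in\mathcal{V}\}$. *)

From Stdlib Require Import Reals Lra.
Open Scope R_scope.

(* q = a + b i + c j + d k *)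
Record quat := Quat { qa : R; qb : R; qc : R; qd : R }.

Definition q0 : quat := Quat 0 0 0 0.

Definition qadd (p q : quat) : quat :=
  Quat (qa p + qa q) (qb p + qb q) (qc p + qc q) (qd p + qd q).

Definition qopp (p : quat) : quat := Quat (- qa p) (- qb p) (- qc p) (- qd p).

(* Hamilton product: i^2 = j^2 = k^2 = ijk = -1 *)
Definition qmul (p q : quat) : quat :=
  Quat (qa p * qa q - qb p * qb q - qc p * qc q - qd p * qd q)
       (qa p * qb q + qb p * qa q + qc p * qd q - qd p * qc q)
       (qa p * qc q - qb p * qd q + qc p * qa q + qd p * qb q)
       (qa p * qd q + qb p * qc q - qc p * qb q + qd p * qa q).

Definition qconj (q : quat) : quat := Quat (qa q) (- qb q) (- qc q) (- qd q).

Definition qprime (q : quat) : quat := Quat (qa q) (- qb q) (- qc q) (qd q).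

Definition inV (q : quat) : Prop := qd q = 0.

Definition inSH (xi eta : quat) : Prop :=
  (xi, eta) <> (q0, q0) /\ inV (qmul xi (qconj eta)).

(* Take tau = (conj xi, conj eta).  Then tau kappa = |xi|^2 + |eta|^2, which is
   nonzero because kappa is.  Since q' = k q conj(k), the product
   (tau kappa_check) k = conj(xi) k eta + conj(conj(xi) k eta) equals
   2 Re(conj(xi) k eta), i.e. -2 times the k-component of xi conj(eta);
   this vanishes exactly because xi conj(eta) lies in V. *)
From Stdlib Require Import Reals Lra.

Definition qnorm2 (q : quat) : R :=
  qa q * qa q + qb q * qb q + qc q * qc q + qd q * qd q.

Lemma qnorm2_ge0 (q : quat) : 0 <= qnorm2 q.
Proof. unfold qnorm2; nra. Qed.

Lemma qnorm2_eq0 (q : quat) : qnorm2 q = 0 -> q = q0.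
Proof.
  destruct q as [a b c d]; unfold qnorm2, q0; simpl; intro H.
  assert (a = 0) by nra; assert (b = 0) by nra.
  assert (c = 0) by nra; assert (d = 0) by nra.
  subst; reflexivity.
Qed.

Lemma qmul_conj_l (q : quat) : qmul (qconj q) q = Quat (qnorm2 q) 0 0 0.
Proof. destruct q; unfold qmul, qconj, qnorm2; simpl; f_equal; ring. Qed.

Lemma qadd_scalars (r s : R) : qadd (Quat r 0 0 0) (Quat s 0 0 0) = Quat (r + s) 0 0 0.
Proof. unfold qadd; simpl; f_equal; ring. Qed.

Lemma qconj_pair_dual (xi eta : quat) :
  qadd (qmul (qconj xi) (qprime eta)) (qmul (qconj eta) (qopp (qprime xi)))
  = Quat 0 0 0 (- 2 * qd (qmul xi (qconj eta))).
Proof.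
  destruct xi, eta; unfold qadd, qmul, qconj, qprime, qopp; simpl; f_equal; ring.
Qed.

Lemma qnorm2_pair_neq0 (xi eta : quat) :
  (xi, eta) <> (q0, q0) -> qnorm2 xi + qnorm2 eta <> 0.
Proof.
  intros Hne Hsum; apply Hne.
  pose proof (qnorm2_ge0 xi); pose proof (qnorm2_ge0 eta).
  rewrite (qnorm2_eq0 xi), (qnorm2_eq0 eta) by lra; reflexivity.
Qed.

Theorem lemma3p8 (xi eta : quat) (hk : inSH xi eta) :
  exists alpha beta : quat,
    let tk := qadd (qmul alpha xi) (qmul beta eta) in
    let tkc := qadd (qmul alpha (qprime eta)) (qmul beta (qopp (qprime xi))) in
    (tk = q0 /\ tkc <> q0) \/ (tk <> q0 /\ tkc = q0).
Proof.
  destruct hk as [Hne HV].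
  exists (qconj xi), (qconj eta); simpl; right; split.
  - rewrite !qmul_conj_l, qadd_scalars.
    intro H; injection H as Hsum; exact (qnorm2_pair_neq0 xi eta Hne Hsum).
  - rewrite qconj_pair_dual, HV; unfold q0; f_equal; ring.
Qed.
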